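(* Let $\Re_1,\Re_2$ be commutative Krasner hyperrings with identity, $\varphi_i:L(\Re_i)\to L(\Re_i)\cup\{\emptyset\}$ functions ($i=1,2$), $\Re=\Re_1\times\Re_2$, and $\phi=\varphi_1\times\varphi_2$, i.e. $\phi(N_1\times N_2)=\varphi_1(N_1)\times\varphi_2(N_2)$. Then a proper hyperideal $N$ of $\Re$ is $\phi$-prime if and only if $N$ is of one of the following types: (i) $N=N_1\times N_2$ where $N_i$ is a proper hyperideal of $\Re_i$ with $\varphi_i(N_i)=N_i$ ($i=1,2$); (ii) $N=N_1\times\Re_2$ where $N_1$ is a proper $\varphi_1$-prime hyperideal of $\Re_1$, which must be prime if $\varphi_2(\Re_2)\ne\Re_2$; (iii) $N=\Re_1\times N_2$ where $N_2$ is a proper $\varphi_2$-prime hyperideal of $\Re_2$, which must be prime if $\varphi_1(\Re_1)\ne\Re_1$.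
   Context: Krasner hyperring: $(\Re,\oplus)$ canonical hypergroup, $(\Re,\circ)$ commutative semigroup with identity $1\ne0$, $0$ absorbing, distributive. Hyperideals and $L(\Re)$ as usual. $\Re_1\times\Re_2$ has componentwise operations and every hyperideal has the form $N_1\times N_2$ with $N_i\in L(\Re_i)$; a product with $\emptyset$ is $\emptyset$. A hyperideal $N$ is $\psi$-prime if $a\circ b\in N$, $a\circ b\notin\psi(N)$ imply $a\in N$ or $b\in N$; prime if $a\circ b\in N$ implies $a\in N$ or $b\in N$. *)

Set Implicit Arguments.

(* Raw operations of a (Krasner) hyperring on a carrier T.
   hadd x y z  means  z \in x (+) y. *)
Record hops (T : Type) := HOps {
  hadd : T -> T -> T -> Prop;
  hzero : T;
  hneg : T -> T;
  hmul : T -> T -> T;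
  hone : T
}.
Arguments hadd {T} _ _ _ _.
Arguments hzero {T} _.
Arguments hneg {T} _ _.
Arguments hmul {T} _ _ _.
Arguments hone {T} _.

Definition is_krasner {T : Type} (o : hops T) : Prop :=
  (forall x y, exists z, hadd o x y z) /\
  (forall x y z w, (exists u, hadd o x y u /\ hadd o u z w) <->
                   (exists u, hadd o y z u /\ hadd o x u w)) /\
  (forall x y z, hadd o x y z <-> hadd o y x z) /\
  (forall x z, hadd o x (hzero o) z <-> z = x) /\
  (forall x, hadd o x (hneg o x) (hzero o)) /\
  (forall x y, hadd o x y (hzero o) -> y = hneg o x) /\
  (forall x y z, hadd o x y z -> hadd o (hneg o x) z y) /\
  (forall x y z, hmul o x (hmul o y z) = hmul o (hmul o x y) z) /\
  (forall x y, hmul o x y = hmul o y x) /\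
  (forall x, hmul o (hone o) x = x) /\
  hone o <> hzero o /\
  (forall x, hmul o (hzero o) x = hzero o) /\
  (* distributivity: a o (b (+) c) = a o b (+) a o c *)
  (forall a b c w, (exists z, hadd o b c z /\ w = hmul o a z) <->
                   hadd o (hmul o a b) (hmul o a c) w).

Record KHR := KHRing {
  kcar :> Type;
  kops : hops kcar;
  kax : is_krasner kops
}.

Definition prod_ops {T1 T2 : Type} (o1 : hops T1) (o2 : hops T2) : hops (T1 * T2) :=
  HOps (fun x y z => hadd o1 (fst x) (fst y) (fst z) /\ hadd o2 (snd x) (snd y) (snd z))
       (hzero o1, hzero o2)
       (fun x => (hneg o1 (fst x), hneg o2 (snd x)))
       (fun x y => (hmul o1 (fst x) (fst y), hmul o2 (snd x) (snd y)))
       (hone o1, hone o2).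

Definition setT {T : Type} : T -> Prop := fun _ => True.
Definition set0 {T : Type} : T -> Prop := fun _ => False.
Definition subset {T : Type} (A B : T -> Prop) : Prop := forall x, A x -> B x.
Definition setX {T1 T2 : Type} (A : T1 -> Prop) (B : T2 -> Prop) : T1 * T2 -> Prop :=
  fun p => A (fst p) /\ B (snd p).

Definition hyperideal {T : Type} (o : hops T) (N : T -> Prop) : Prop :=
  (exists x, N x) /\
  (forall a b z, N a -> N b -> hadd o a (hneg o b) z -> N z) /\
  (forall r a, N a -> N (hmul o r a)).

Definition proper {T : Type} (N : T -> Prop) : Prop := exists x, ~ N x.

Definition prime_hi {T : Type} (o : hops T) (N : T -> Prop) : Prop :=
  forall a b, N (hmul o a b) -> N a \/ N b.

Definition psi_prime {T : Type} (o : hops T) (psi : (T -> Prop) -> (T -> Prop))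
  (N : T -> Prop) : Prop :=
  forall a b, N (hmul o a b) -> ~ psi N (hmul o a b) -> N a \/ N b.

(* phi : L(R) -> L(R) \cup {empty}, with the standard convention phi(N) \subseteq N *)
Definition phi_fun {T : Type} (o : hops T) (phi : (T -> Prop) -> (T -> Prop)) : Prop :=
  forall N, hyperideal o N ->
    (hyperideal o (phi N) \/ phi N = set0) /\ subset (phi N) N.

(* phi1 x phi2 : (N1 x N2) |-> phi1(N1) x phi2(N2); the components of a
   hyperideal N of R1 x R2 are recovered as its projections. *)
Definition phiprod {T1 T2 : Type} (phi1 : (T1 -> Prop) -> (T1 -> Prop))
  (phi2 : (T2 -> Prop) -> (T2 -> Prop)) (N : T1 * T2 -> Prop) : T1 * T2 -> Prop :=
  setX (phi1 (fun a => exists b, N (a, b))) (phi2 (fun b => exists a, N (a, b))).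

From Stdlib Require Import Classical FunctionalExtensionality PropExtensionality.

(* A hyperideal N of R1 x R2 is the product of its two projections, since
   (a, b) is in (a, 0) (+) (0, b).  Testing phi-primeness of N1 x N2 on the
   products (1, 0) o (x, 1) = (x, 0) shows that, when both factors are proper,
   N1 and N2 must be fixed by phi1 and phi2.  When N2 = R2, the products
   (a, 1) o (b, c) = (a o b, c) make N1 x R2 phi-prime exactly when N1 is
   phi1-prime and, if some c lies outside phi2(R2), moreover prime.  The case
   N1 = R1 is the mirror image, obtained by swapping the factors. *)

Lemma pred_ext {T : Type} (A B : T -> Prop) : (forall x, A x <-> B x) -> A = B.
Proof.
  intro H. apply functional_extensionality; intro x.
  apply propositional_extensionality, H.
Qed.

Lemma properP {T : Type} (A : T -> Prop) : proper A <-> A <> setT.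
Proof.
  split.
  - intros [x Hx] E. apply Hx. rewrite E. exact I.
  - intro H. apply NNPP. intro Hfull. apply H, pred_ext. intro x. split.
    + intros _. exact I.
    + intros _. apply NNPP. intro Hx. apply Hfull. exists x. exact Hx.
Qed.

Lemma not_proper_setT {T : Type} (A : T -> Prop) : ~ proper A -> A = setT.
Proof. intro H. apply NNPP. intro E. apply H, properP, E. Qed.

(* The part of the Krasner axioms needed below; unlike [is_krasner] it is
   transferred to [prod_ops] componentwise at no cost. *)
Record hyperring_laws {T : Type} (o : hops T) : Prop := {
  haddC : forall x y z, hadd o x y z <-> hadd o y x z;
  hadd0 : forall x z, hadd o x (hzero o) z <-> z = x;
  hnegK : forall x, hneg o (hneg o x) = x;
  hmulC : forall x y, hmul o x y = hmul o y x;
  hmul1 : forall x, hmul o (hone o) x = x;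
  hmul0 : forall x, hmul o (hzero o) x = hzero o
}.
Arguments haddC {T o} _ _ _ _.
Arguments hadd0 {T o} _ _ _.
Arguments hnegK {T o} _ _.
Arguments hmulC {T o} _ _ _.
Arguments hmul1 {T o} _ _.
Arguments hmul0 {T o} _ _.

Lemma krasner_laws (R : KHR) : hyperring_laws (kops R).
Proof.
  destruct (kax R)
    as (_ & _ & addC & add0 & addN & negU & _ & _ & mulC & mul1 & _ & mul0 & _).
  split; auto.
  intro x. symmetry. apply negU, addC, addN.
Qed.

Lemma prod_laws {T1 T2 : Type} {o1 : hops T1} {o2 : hops T2} :
  hyperring_laws o1 -> hyperring_laws o2 -> hyperring_laws (prod_ops o1 o2).
Proof.
  intros L1 L2. split; simpl.
  - intros x y z. rewrite (haddC L1), (haddC L2). reflexivity.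
  - intros [x1 x2] [z1 z2]. simpl. rewrite (hadd0 L1), (hadd0 L2). split.
    + intros [-> ->]. reflexivity.
    + intro E. injection E. auto.
  - intros [x1 x2]. simpl. rewrite (hnegK L1), (hnegK L2). reflexivity.
  - intros x y. rewrite (hmulC L1), (hmulC L2). reflexivity.
  - intros [x1 x2]. simpl. rewrite (hmul1 L1), (hmul1 L2). reflexivity.
  - intros [x1 x2]. simpl. rewrite (hmul0 L1), (hmul0 L2). reflexivity.
Qed.

Section Hyperideal.
Context {T : Type} {o : hops T} (L : hyperring_laws o).
Context {N : T -> Prop} (HN : hyperideal o N).

Lemma hyperideal_zero : N (hzero o).
Proof.
  destruct HN as [[x Hx] [_ Hmul]].
  rewrite <- (hmul0 L x). apply Hmul, Hx.
Qed.

Lemma hyperideal_neg a : N a -> N (hneg o a).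
Proof.
  intro Ha. apply (proj1 (proj2 HN) (hzero o) a); [apply hyperideal_zero | exact Ha |].
  apply (haddC L), (hadd0 L). reflexivity.
Qed.

Lemma hyperideal_add a b z : N a -> N b -> hadd o a b z -> N z.
Proof.
  intros Ha Hb Hz. apply (proj1 (proj2 HN) a (hneg o b)); auto using hyperideal_neg.
  rewrite (hnegK L). exact Hz.
Qed.

Lemma proper_hyperideal_one : proper N -> ~ N (hone o).
Proof.
  intros [x Hx] H1. apply Hx.
  rewrite <- (hmul1 L x), (hmulC L). apply (proj2 (proj2 HN)), H1.
Qed.

End Hyperideal.

Definition proj_fst {T1 T2 : Type} (N : T1 * T2 -> Prop) : T1 -> Prop :=
  fun a => exists b, N (a, b).
Definition proj_snd {T1 T2 : Type} (N : T1 * T2 -> Prop) : T2 -> Prop :=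
  fun b => exists a, N (a, b).
Definition swap_set {T1 T2 : Type} (N : T1 * T2 -> Prop) : T2 * T1 -> Prop :=
  fun p => N (snd p, fst p).

Lemma swap_setX {T1 T2 : Type} (A : T1 -> Prop) (B : T2 -> Prop) :
  swap_set (setX A B) = setX B A.
Proof. apply pred_ext. intros [b a]. unfold swap_set, setX. simpl. tauto. Qed.

Section ProductHyperideal.
Context {T1 T2 : Type} {o1 : hops T1} {o2 : hops T2}.
Context (L1 : hyperring_laws o1) (L2 : hyperring_laws o2).
Context {N : T1 * T2 -> Prop} (HN : hyperideal (prod_ops o1 o2) N).

Lemma hyperideal_swap : hyperideal (prod_ops o2 o1) (swap_set N).
Proof.
  destruct HN as [[[x1 x2] Hx] [Hadd Hmul]]. split; [|split].
  - exists (x2, x1). exact Hx.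
  - intros [a2 a1] [b2 b1] [z2 z1] Ha Hb [H2 H1].
    exact (Hadd (a1, a2) (b1, b2) (z1, z2) Ha Hb (conj H1 H2)).
  - intros [r2 r1] [a2 a1] Ha. exact (Hmul (r1, r2) (a1, a2) Ha).
Qed.

Lemma hyperideal_fst_zero a b : N (a, b) -> N (a, hzero o2).
Proof.
  intro H. rewrite <- (hmul1 L1 a), <- (hmul0 L2 b).
  exact (proj2 (proj2 HN) (hone o1, hzero o2) (a, b) H).
Qed.

Lemma hyperideal_snd_zero a b : N (a, b) -> N (hzero o1, b).
Proof.
  intro H. rewrite <- (hmul0 L1 a), <- (hmul1 L2 b).
  exact (proj2 (proj2 HN) (hzero o1, hone o2) (a, b) H).
Qed.

Lemma prod_hyperideal_setX : N = setX (proj_fst N) (proj_snd N).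
Proof.
  apply pred_ext. intros [a b]. split.
  - intro H. split; eexists; exact H.
  - intros [[b' Hb'] [a' Ha']]. simpl in *.
    apply (hyperideal_add (prod_laws L1 L2) HN (a, hzero o2) (hzero o1, b)).
    + exact (hyperideal_fst_zero _ _ Hb').
    + exact (hyperideal_snd_zero _ _ Ha').
    + split; simpl; [|apply (haddC L2)]; apply hadd0; auto.
Qed.

Lemma hyperideal_proj_fst : hyperideal o1 (proj_fst N).
Proof.
  split; [|split].
  - exists (hzero o1), (hzero o2). exact (hyperideal_zero (prod_laws L1 L2) HN).
  - intros a b z [a' Ha] [b' Hb] Hz. exists (hneg o2 (hzero o2)).
    apply (proj1 (proj2 HN) (a, hzero o2) (b, hzero o2)).
    + exact (hyperideal_fst_zero _ _ Ha).
    + exact (hyperideal_fst_zero _ _ Hb).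
    + split; [exact Hz|]. apply (haddC L2), (hadd0 L2). reflexivity.
  - intros r a [b Hb]. exists (hmul o2 (hone o2) b).
    exact (proj2 (proj2 HN) (r, hone o2) (a, b) Hb).
Qed.

End ProductHyperideal.

Lemma hyperideal_proj_snd {T1 T2 : Type} {o1 : hops T1} {o2 : hops T2}
  (L1 : hyperring_laws o1) (L2 : hyperring_laws o2) {N : T1 * T2 -> Prop} :
  hyperideal (prod_ops o1 o2) N -> hyperideal o2 (proj_snd N).
Proof. intro HN. exact (hyperideal_proj_fst L2 L1 (hyperideal_swap HN)). Qed.

Lemma phiprod_setX {T1 T2 : Type}
  (phi1 : (T1 -> Prop) -> T1 -> Prop) (phi2 : (T2 -> Prop) -> T2 -> Prop)
  (A : T1 -> Prop) (B : T2 -> Prop) :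
  (exists a, A a) -> (exists b, B b) ->
  phiprod phi1 phi2 (setX A B) = setX (phi1 A) (phi2 B).
Proof.
  intros [a Ha] [b Hb]. unfold phiprod.
  replace (fun a => exists b, setX A B (a, b)) with A.
  2:{ apply pred_ext. intro x. unfold setX. simpl. firstorder. }
  replace (fun b => exists a, setX A B (a, b)) with B.
  2:{ apply pred_ext. intro y. unfold setX. simpl. firstorder. }
  reflexivity.
Qed.

Section PhiPrimeProduct.
Context {T1 T2 : Type} {o1 : hops T1} {o2 : hops T2}.
Context {phi1 : (T1 -> Prop) -> T1 -> Prop} {phi2 : (T2 -> Prop) -> T2 -> Prop}.

Lemma psi_prime_swap (N : T1 * T2 -> Prop) :
  psi_prime (prod_ops o1 o2) (phiprod phi1 phi2) N <->
  psi_prime (prod_ops o2 o1) (phiprod phi2 phi1) (swap_set N).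
Proof.
  unfold psi_prime, phiprod, setX, swap_set. simpl.
  split; intros H [a1 a2] [b1 b2]; specialize (H (a2, a1) (b2, b1)); simpl in *; tauto.
Qed.

Context (L1 : hyperring_laws o1) (L2 : hyperring_laws o2).

Lemma psi_prime_setX_fixed_fst (A : T1 -> Prop) (B : T2 -> Prop) :
  phi_fun o1 phi1 -> hyperideal o1 A -> proper A -> hyperideal o2 B -> proper B ->
  psi_prime (prod_ops o1 o2) (phiprod phi1 phi2) (setX A B) -> phi1 A = A.
Proof.
  intros Hphi1 HA PA HB PB H. unfold psi_prime in H.
  rewrite (phiprod_setX phi1 phi2 A B (proj1 HA) (proj1 HB)) in H.
  apply pred_ext. intro x. split; [apply (proj2 (Hphi1 A HA))|].
  intro Hx. apply NNPP. intro Hphix.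
  destruct (H (hone o1, hzero o2) (x, hone o2)) as [[H1 _] | [_ H1]]; simpl.
  - rewrite (hmul1 L1), (hmul0 L2). split; [exact Hx | exact (hyperideal_zero L2 HB)].
  - rewrite (hmul1 L1). intros [Hphi _]. exact (Hphix Hphi).
  - exact (proper_hyperideal_one L1 HA PA H1).
  - exact (proper_hyperideal_one L2 HB PB H1).
Qed.

Lemma psi_prime_setXT (A : T1 -> Prop) : (exists a, A a) ->
  psi_prime (prod_ops o1 o2) (phiprod phi1 phi2) (setX A setT) <->
  psi_prime o1 phi1 A /\ (phi2 setT <> setT -> prime_hi o1 A).
Proof.
  intro HA. unfold psi_prime.
  rewrite (phiprod_setX phi1 phi2 A setT HA (ex_intro _ (hzero o2) I)).
  unfold prime_hi, setX. simpl. split.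
  - intro H.
    assert (Hc : forall a b c, A (hmul o1 a b) -> ~ (phi1 A (hmul o1 a b) /\ phi2 setT c) ->
                 A a \/ A b).
    { intros a b c Hab Hn. specialize (H (a, hone o2) (b, c)). simpl in H.
      rewrite (hmul1 L2) in H. destruct H as [[Ha _] | [Hb _]]; auto.
      split; [exact Hab | exact I]. }
    split.
    + intros a b Hab Hn. apply (Hc a b (hone o2) Hab). tauto.
    + intros Hne a b Hab. apply properP in Hne. destruct Hne as [c Hnc].
      apply (Hc a b c Hab). tauto.
  - intros [Hpsi Hprime] [a1 a2] [b1 b2] [Hab _] Hn. simpl in *.
    assert (Hor : A a1 \/ A b1).
    { destruct (classic (phi1 A (hmul o1 a1 b1))) as [Hphi | Hphi]; auto.
      apply Hprime; [|exact Hab].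
      intro E. apply Hn. split; [exact Hphi | rewrite E; exact I]. }
    destruct Hor; [left | right]; split; auto; exact I.
Qed.

End PhiPrimeProduct.

Lemma psi_prime_setX_fixed {T1 T2 : Type} {o1 : hops T1} {o2 : hops T2}
  (L1 : hyperring_laws o1) (L2 : hyperring_laws o2)
  {phi1 : (T1 -> Prop) -> T1 -> Prop} {phi2 : (T2 -> Prop) -> T2 -> Prop}
  (A : T1 -> Prop) (B : T2 -> Prop) :
  phi_fun o1 phi1 -> phi_fun o2 phi2 ->
  hyperideal o1 A -> proper A -> hyperideal o2 B -> proper B ->
  psi_prime (prod_ops o1 o2) (phiprod phi1 phi2) (setX A B) <->
  phi1 A = A /\ phi2 B = B.
Proof.
  intros Hphi1 Hphi2 HA PA HB PB. split.
  - intro H. split.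
    + exact (psi_prime_setX_fixed_fst L1 L2 A B Hphi1 HA PA HB PB H).
    + apply psi_prime_swap in H. rewrite swap_setX in H.
      exact (psi_prime_setX_fixed_fst L2 L1 B A Hphi2 HB PB HA PA H).
  - intros [E1 E2] x y Hxy Hn. exfalso. apply Hn.
    rewrite (phiprod_setX phi1 phi2 A B (proj1 HA) (proj1 HB)), E1, E2. exact Hxy.
Qed.

Lemma psi_prime_setTX {T1 T2 : Type} {o1 : hops T1} {o2 : hops T2}
  (L1 : hyperring_laws o1)
  {phi1 : (T1 -> Prop) -> T1 -> Prop} {phi2 : (T2 -> Prop) -> T2 -> Prop}
  (B : T2 -> Prop) : (exists b, B b) ->
  psi_prime (prod_ops o1 o2) (phiprod phi1 phi2) (setX setT B) <->
  psi_prime o2 phi2 B /\ (phi1 setT <> setT -> prime_hi o2 B).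
Proof.
  intro HB. rewrite psi_prime_swap, swap_setX. exact (psi_prime_setXT L1 B HB).
Qed.

Theorem mainTheorem11 (R1 R2 : KHR)
  (phi1 : (R1 -> Prop) -> (R1 -> Prop)) (phi2 : (R2 -> Prop) -> (R2 -> Prop))
  (Hphi1 : phi_fun (kops R1) phi1) (Hphi2 : phi_fun (kops R2) phi2)
  (N : R1 * R2 -> Prop)
  (HN : hyperideal (prod_ops (kops R1) (kops R2)) N) (HNp : proper N) :
  psi_prime (prod_ops (kops R1) (kops R2)) (phiprod phi1 phi2) N <->
  ( (exists (N1 : R1 -> Prop) (N2 : R2 -> Prop),
        hyperideal (kops R1) N1 /\ proper N1 /\
        hyperideal (kops R2) N2 /\ proper N2 /\
        phi1 N1 = N1 /\ phi2 N2 = N2 /\ N = setX N1 N2)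
    \/ (exists N1 : R1 -> Prop,
        hyperideal (kops R1) N1 /\ proper N1 /\ psi_prime (kops R1) phi1 N1 /\
        (phi2 setT <> setT -> prime_hi (kops R1) N1) /\ N = setX N1 setT)
    \/ (exists N2 : R2 -> Prop,
        hyperideal (kops R2) N2 /\ proper N2 /\ psi_prime (kops R2) phi2 N2 /\
        (phi1 setT <> setT -> prime_hi (kops R2) N2) /\ N = setX setT N2) ).
Proof.
  pose proof (krasner_laws R1) as L1. pose proof (krasner_laws R2) as L2.
  split.
  - pose proof (prod_hyperideal_setX L1 L2 HN) as HNX.
    pose proof (hyperideal_proj_fst L1 L2 HN) as HP1.
    pose proof (hyperideal_proj_snd L1 L2 HN) as HP2.
    revert HNX HP1 HP2. generalize (proj_fst N) (proj_snd N).
    intros P1 P2 -> HP1 HP2 H.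
    destruct (classic (proper P1)) as [PP1 | NP1], (classic (proper P2)) as [PP2 | NP2].
    + left. exists P1, P2.
      rewrite (psi_prime_setX_fixed L1 L2 P1 P2 Hphi1 Hphi2 HP1 PP1 HP2 PP2) in H.
      intuition.
    + apply not_proper_setT in NP2. subst P2. right; left. exists P1.
      rewrite (psi_prime_setXT L2 P1 (proj1 HP1)) in H. intuition.
    + apply not_proper_setT in NP1. subst P1. right; right. exists P2.
      rewrite (psi_prime_setTX L1 P2 (proj1 HP2)) in H. intuition.
    + apply not_proper_setT in NP1, NP2. subst P1 P2.
      destruct HNp as [x Hx]. contradiction Hx. split; exact I.
  - intros [(A & B & HA & PA & HB & PB & E1 & E2 & ->)
           | [(A & HA & PA & Hpsi & Hprime & ->) | (B & HB & PB & Hpsi & Hprime & ->)]].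
    + apply psi_prime_setX_fixed; auto.
    + apply psi_prime_setXT; auto. exact (proj1 HA).
    + apply psi_prime_setTX; auto. exact (proj1 HB).
Qed.
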